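(* Let $\mathcal{C}$ be a CD-category with a normalisation structure $\mathrm{nrm}$ and cancellative comparators. For all maps $f\colon A\to B$ and $h\colon B\to C$, one has $\mathrm{nrm}\big(h\circ\mathrm{nrm}(f)\big)=\mathrm{nrm}(h\circ f)$; i.e. a normalisation box nested inside another normalisation box can be removed.
   Context: A CD-category is a symmetric monoidal category (unit $I$) in which every object $X$ carries a copy map $\Delta_X\colon X\to X\otimes X$ and a discard map $!_X\colon X\to I$ forming a commutative comonoid, compatibly with $\otimes$. A map $f$ is a channel if $!\circ f=\,!$. The domain of $f\colon X\to Y$ is $\mathrm{dom}(f)=\,!_Y\circ f$; $g$ is a normalisation of $f$ if $f=(\mathrm{dom}(f)\otimes g)\circ\Delta_X$; $f$ is normalised if it is a normalisation of itself. A normalisation structure assigns to every $f\colon X\to Y$ a normalised map $\mathrm{nrm}(f)\colon X\to Y$ that is a normalisation of $f$, such that $\mathrm{nrm}(f\otimes g)=\mathrm{nrm}(f)\otimes\mathrm{nrm}(g)$, $\mathrm{nrm}(h\circ f)=h\circ\mathrm{nrm}(f)$ for every channel $h$, $\mathrm{nrm}(f\circ(\mathrm{id}\otimes !))=\mathrm{nrm}(f)\circ(\mathrm{id}\otimes !)$, $\mathrm{nrm}(f\circ\Delta)=\mathrm{nrm}(f)\circ\Delta$, and $\mathrm{nrm}(f)=f$ when $f$ is normalised. A comparator structure assigns to each $X$ a map $\nabla_X\colon X\otimes X\to X$ that is commutative, associative, compatible with $\otimes$ and satisfies $\nabla\circ\Delta=\mathrm{id}$ and $(\nabla\otimes\mathrm{id})\circ(\mathrm{id}\otimes\Delta)=\Delta\circ\nabla=(\mathrm{id}\otimes\nabla)\circ(\Delta\otimes\mathrm{id})$.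 With $\cap_X=\,!_X\circ\nabla_X$, comparators are cancellative if for $f,g\colon A\to Y\otimes Z$, $(\cap_Y\otimes\mathrm{id}_Z)\circ(\mathrm{id}_Y\otimes f)=(\cap_Y\otimes\mathrm{id}_Z)\circ(\mathrm{id}_Y\otimes g)$ implies $f=g$. *)

Declare Scope cat_scope.
Delimit Scope cat_scope with cat.
Local Open Scope cat_scope.

Record SMC := {
  Ob :> Type;
  Hom : Ob -> Ob -> Type;
  idm : forall (X : Ob), Hom X X;
  comp : forall {X Y Z : Ob}, Hom Y Z -> Hom X Y -> Hom X Z;
  comp_idl : forall X Y (f : Hom X Y), comp (idm Y) f = f;
  comp_idr : forall X Y (f : Hom X Y), comp f (idm X) = f;
  comp_assoc : forall X Y Z W (f : Hom X Y) (g : Hom Y Z) (h : Hom Z W),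
      comp h (comp g f) = comp (comp h g) f;

  tens : Ob -> Ob -> Ob;
  unit_ob : Ob;
  tensm : forall {X Y X' Y' : Ob}, Hom X X' -> Hom Y Y' -> Hom (tens X Y) (tens X' Y');
  tensm_id : forall X Y, tensm (idm X) (idm Y) = idm (tens X Y);
  tensm_comp : forall X Y Z X' Y' Z' (f : Hom X Y) (g : Hom Y Z)
      (f' : Hom X' Y') (g' : Hom Y' Z'),
      tensm (comp g f) (comp g' f') = comp (tensm g g') (tensm f f');

  assoc : forall X Y Z, Hom (tens (tens X Y) Z) (tens X (tens Y Z));
  assoc_inv : forall X Y Z, Hom (tens X (tens Y Z)) (tens (tens X Y) Z);
  assoc_iso1 : forall X Y Z, comp (assoc_inv X Y Z) (assoc X Y Z) = idm _;
  assoc_iso2 : forall X Y Z, comp (assoc X Y Z) (assoc_inv X Y Z) = idm _;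
  assoc_nat : forall X Y Z X' Y' Z' (f : Hom X X') (g : Hom Y Y') (h : Hom Z Z'),
      comp (assoc X' Y' Z') (tensm (tensm f g) h)
      = comp (tensm f (tensm g h)) (assoc X Y Z);

  lunit : forall X, Hom (tens unit_ob X) X;
  lunit_inv : forall X, Hom X (tens unit_ob X);
  lunit_iso1 : forall X, comp (lunit_inv X) (lunit X) = idm _;
  lunit_iso2 : forall X, comp (lunit X) (lunit_inv X) = idm _;
  lunit_nat : forall X Y (f : Hom X Y),
      comp f (lunit X) = comp (lunit Y) (tensm (idm unit_ob) f);

  runit : forall X, Hom (tens X unit_ob) X;
  runit_inv : forall X, Hom X (tens X unit_ob);
  runit_iso1 : forall X, comp (runit_inv X) (runit X) = idm _;
  runit_iso2 : forall X, comp (runit X) (runit_inv X) = idm _;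
  runit_nat : forall X Y (f : Hom X Y),
      comp f (runit X) = comp (runit Y) (tensm f (idm unit_ob));

  pentagon : forall W X Y Z,
      comp (tensm (idm W) (assoc X Y Z))
           (comp (assoc W (tens X Y) Z) (tensm (assoc W X Y) (idm Z)))
      = comp (assoc W X (tens Y Z)) (assoc (tens W X) Y Z);
  triangle : forall X Y,
      comp (tensm (idm X) (lunit Y)) (assoc X unit_ob Y)
      = tensm (runit X) (idm Y);

  swap : forall X Y, Hom (tens X Y) (tens Y X);
  swap_nat : forall X Y X' Y' (f : Hom X X') (g : Hom Y Y'),
      comp (swap X' Y') (tensm f g) = comp (tensm g f) (swap X Y);
  swap_invol : forall X Y, comp (swap Y X) (swap X Y) = idm (tens X Y);
  hexagon : forall X Y Z,
      comp (assoc Y Z X) (comp (swap X (tens Y Z)) (assoc X Y Z))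
      = comp (tensm (idm Y) (swap X Z))
             (comp (assoc Y X Z) (tensm (swap X Y) (idm Z)))
}.

Arguments Hom {s} X Y.
Arguments idm {s} X.
Arguments comp {s X Y Z} g f.
Arguments tens {s} X Y.
Arguments unit_ob {s}.
Arguments tensm {s X Y X' Y'} f g.
Arguments assoc {s} X Y Z.
Arguments assoc_inv {s} X Y Z.
Arguments lunit {s} X.
Arguments lunit_inv {s} X.
Arguments runit {s} X.
Arguments runit_inv {s} X.
Arguments swap {s} X Y.

Notation "g \o f" := (comp g f) (at level 40, left associativity) : cat_scope.
Notation "X (x) Y" := (tens X Y) (at level 35, right associativity) : cat_scope.
Notation "f <x> g" := (tensm f g) (at level 35, right associativity) : cat_scope.

Definition mid {C : SMC} (X Y : C) :
  Hom ((X (x) X) (x) (Y (x) Y)) ((X (x) Y) (x) (X (x) Y)) :=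
  assoc_inv X Y (X (x) Y)
  \o (idm X <x> assoc Y X Y)
  \o (idm X <x> (swap X Y <x> idm Y))
  \o (idm X <x> assoc_inv X Y Y)
  \o assoc X X (Y (x) Y).

Definition mid_inv {C : SMC} (X Y : C) :
  Hom ((X (x) Y) (x) (X (x) Y)) ((X (x) X) (x) (Y (x) Y)) :=
  assoc_inv X X (Y (x) Y)
  \o (idm X <x> assoc X Y Y)
  \o (idm X <x> (swap Y X <x> idm Y))
  \o (idm X <x> assoc_inv Y X Y)
  \o assoc X Y (X (x) Y).

Record CDCat := {
  cd_smc :> SMC;
  copy : forall X : cd_smc, Hom X (X (x) X);
  disc : forall X : cd_smc, Hom X unit_ob;
  copy_coassoc : forall X,
      assoc X X X \o (copy X <x> idm X) \o copy X = (idm X <x> copy X) \o copy X;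
  copy_counit_l : forall X, lunit X \o (disc X <x> idm X) \o copy X = idm X;
  copy_counit_r : forall X, runit X \o (idm X <x> disc X) \o copy X = idm X;
  copy_comm : forall X, swap X X \o copy X = copy X;
  copy_tens : forall X Y, copy (X (x) Y) = mid X Y \o (copy X <x> copy Y);
  disc_tens : forall X Y, disc (X (x) Y) = lunit unit_ob \o (disc X <x> disc Y);
  copy_unit : copy unit_ob = lunit_inv unit_ob;
  disc_unit : disc unit_ob = idm unit_ob
}.

Arguments copy {c} X.
Arguments disc {c} X.

Section CDDefs.
Context {C : CDCat}.

Definition channel {X Y : C} (f : Hom X Y) : Prop := disc Y \o f = disc X.

Definition dom {X Y : C} (f : Hom X Y) : Hom X unit_ob := disc Y \o f.

Definition is_normalisation {X Y : C} (g f : Hom X Y) : Prop :=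
  f = lunit Y \o (dom f <x> g) \o copy X.

Definition normalised {X Y : C} (f : Hom X Y) : Prop := is_normalisation f f.

Definition discr (X Z : C) : Hom (X (x) Z) X := runit X \o (idm X <x> disc Z).

End CDDefs.

Record NrmStruct (C : CDCat) := {
  nrm : forall {X Y : C}, Hom X Y -> Hom X Y;
  nrm_normalised : forall X Y (f : Hom X Y), normalised (nrm f);
  nrm_normalisation : forall X Y (f : Hom X Y), is_normalisation (nrm f) f;
  nrm_tens : forall X Y X' Y' (f : Hom X X') (g : Hom Y Y'),
      nrm (f <x> g) = nrm f <x> nrm g;
  nrm_channel : forall X Y Z (f : Hom X Y) (h : Hom Y Z),
      channel h -> nrm (h \o f) = h \o nrm f;
  nrm_discr : forall X Z Y (f : Hom X Y),
      nrm (f \o discr X Z) = nrm f \o discr X Z;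
  nrm_copy : forall X Y (f : Hom (X (x) X) Y),
      nrm (f \o copy X) = nrm f \o copy X;
  nrm_id_normalised : forall X Y (f : Hom X Y), normalised f -> nrm f = f
}.

Arguments nrm {C} n {X Y} f.

Record Comparators (C : CDCat) := {
  cmp : forall X : C, Hom (X (x) X) X;
  cmp_comm : forall X, cmp X \o swap X X = cmp X;
  cmp_assoc : forall X,
      cmp X \o (cmp X <x> idm X) = cmp X \o (idm X <x> cmp X) \o assoc X X X;
  cmp_tens : forall X Y, cmp (X (x) Y) = (cmp X <x> cmp Y) \o mid_inv X Y;
  cmp_copy : forall X, cmp X \o copy X = idm X;
  cmp_frob_l : forall X,
      (cmp X <x> idm X) \o assoc_inv X X X \o (idm X <x> copy X) = copy X \o cmp X;
  cmp_frob_r : forall X,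
      (idm X <x> cmp X) \o assoc X X X \o (copy X <x> idm X) = copy X \o cmp X
}.

Arguments cmp {C} c X.

Definition cap {C : CDCat} (K : Comparators C) (X : C) : Hom (X (x) X) unit_ob :=
  disc X \o cmp K X.

Definition cancellative {C : CDCat} (K : Comparators C) : Prop :=
  forall (A Y Z : C) (f g : Hom A (Y (x) Z)),
    (cap K Y <x> idm Z) \o assoc_inv Y Y Z \o (idm Y <x> f)
    = (cap K Y <x> idm Z) \o assoc_inv Y Y Z \o (idm Y <x> g) ->
    f = g.

(* Write [p · k] for [(p ⊗ k) ∘ Δ], so that [g] normalises [f] exactly when
   [f = dom f · g].  Postcomposition commutes with this weighting, and [nrm]
   distributes over it because it commutes with copying, tensoring and the
   channel [λ].  Hence both [nrm (h ∘ f)] and [nrm (h ∘ nrm f)] equal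
   [nrm (dom f) · nrm (h ∘ nrm f)]: for the first expand [f = dom f · nrm f],
   for the second expand the normalised map [nrm f = dom (nrm f) · nrm f],
   where [dom (nrm f) = nrm (dom f)] is a fixed point of [nrm]. *)

Local Open Scope cat_scope.

Section Normalisation.
Context {C : CDCat} (N : NrmStruct C).

Definition scale {X Y : C} (p : Hom X unit_ob) (k : Hom X Y) : Hom X Y :=
  lunit Y \o (p <x> k) \o copy X.

Lemma channel_lunit (Y : C) : channel (lunit Y).
Proof.
  unfold channel. rewrite disc_tens, disc_unit, lunit_nat. reflexivity.
Qed.

Lemma channel_disc (X : C) : channel (disc X).
Proof.
  unfold channel. rewrite disc_unit, comp_idl. reflexivity.
Qed.

Lemma comp_scale {X Y Z : C} (p : Hom X unit_ob) (k : Hom X Y) (h : Hom Y Z) :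
  h \o scale p k = scale p (h \o k).
Proof.
  unfold scale. rewrite !comp_assoc, lunit_nat.
  rewrite <- (comp_assoc _ _ _ _ _ (p <x> k)), <- tensm_comp, comp_idl.
  reflexivity.
Qed.

Lemma nrm_scale {X Y : C} (p : Hom X unit_ob) (k : Hom X Y) :
  nrm N (scale p k) = scale (nrm N p) (nrm N k).
Proof.
  unfold scale. rewrite nrm_copy, nrm_channel, nrm_tens by apply channel_lunit.
  reflexivity.
Qed.

Lemma nrm_comp_scale {X Y Z : C} (p : Hom X unit_ob) (k : Hom X Y) (h : Hom Y Z) :
  nrm N (h \o scale p k) = scale (nrm N p) (nrm N (h \o k)).
Proof. rewrite comp_scale. apply nrm_scale. Qed.

Lemma nrm_idem {X Y : C} (f : Hom X Y) : nrm N (nrm N f) = nrm N f.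
Proof. apply nrm_id_normalised, nrm_normalised. Qed.

Lemma dom_nrm {X Y : C} (f : Hom X Y) : dom (nrm N f) = nrm N (dom f).
Proof. symmetry. apply nrm_channel, channel_disc. Qed.

Lemma scale_dom_nrm {X Y : C} (f : Hom X Y) : f = scale (dom f) (nrm N f).
Proof. exact (nrm_normalisation _ N _ _ f). Qed.

Lemma nrm_scale_nrm_dom {X Y : C} (f : Hom X Y) :
  nrm N f = scale (nrm N (dom f)) (nrm N f).
Proof. rewrite <- dom_nrm. exact (nrm_normalised _ N _ _ f). Qed.

Lemma nrm_comp_nrm {X Y Z : C} (f : Hom X Y) (h : Hom Y Z) :
  nrm N (h \o nrm N f) = nrm N (h \o f).
Proof.
  assert (Hhf : nrm N (h \o f) = scale (nrm N (dom f)) (nrm N (h \o nrm N f))).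
  { rewrite <- nrm_comp_scale, <- scale_dom_nrm. reflexivity. }
  assert (Hhnf : nrm N (h \o nrm N f)
                 = scale (nrm N (dom f)) (nrm N (h \o nrm N f))).
  { rewrite <- (nrm_idem (dom f)), <- nrm_comp_scale, <- nrm_scale_nrm_dom.
    reflexivity. }
  rewrite Hhf. exact Hhnf.
Qed.

End Normalisation.

Theorem lemma3p3 (C : CDCat) (N : NrmStruct C) (K : Comparators C) :
  cancellative K ->
  forall (A B D : C) (f : Hom A B) (h : Hom B D),
    nrm N (h \o nrm N f) = nrm N (h \o f).
Proof.
  intros _ A B D f h. apply nrm_comp_nrm.
Qed.
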